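(* Let $\Lambda=(V,\pi,v,\le)$ be a bi-colored weighted ordered vertex with $r(\Lambda)=2$, and identify $V=\{1,\dots,l\}$ via $\le$. If $\pi(1)=\pi(2)=\circ$, then $s(\Lambda)=0$.
   Context: A bi-colored weighted ordered vertex is $\Lambda=(V,\pi,v,\le)$ with $V$ a finite set, $\pi\colon V\to\{\bullet,\circ\}$, $v\colon V\to\mathbb{Z}_{\ge1}$, $\le$ a total order on $V$. Put $V_\bullet=\pi^{-1}(\bullet)$, $V_\circ=\pi^{-1}(\circ)$, $r(\Lambda)=\sum_{i\in V_\bullet}v(i)$, $n(\Lambda)=\sum_{i\in V_\circ}v(i)$; $v_i=(v(i),0)$ if $i\in V_\bullet$, $v_i=(0,v(i))$ if $i\in V_\circ$. For $(r,n)\in\mathbb{Z}_{\ge0}^2\setminus\{0\}$ let $\mu(r,n)=n/r\in\mathbb{Q}\cup\{\infty\}$ ($\infty$ if $r=0$, larger than every rational). For vectors $w_1,\dots,w_l$ define $s_l(w_1,\dots,w_l)=(-1)^k$ if for each $i=1,\dots,l-1$ either (a) $\mu(w_i)>\mu(w_{i+1})$ and $\mu(w_1+\dots+w_i)\ge\mu(w_{i+1}+\dots+w_l)$, or (b) $\mu(w_i)\le\mu(w_{i+1})$ and $\mu(w_1+\dots+w_i)<\mu(w_{i+1}+\dots+w_l)$, where $k$ is the number of $i$ satisfying (b); otherwise $s_l=0$. Set $s(\Lambda)=s_l(v_1,\dots,v_l)$, $l=|V|$. *)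

From mathcomp Require Import all_boot all_order all_algebra.
Set Implicit Arguments. Unset Strict Implicit. Unset Printing Implicit Defensive.
Import Order.TTheory GRing.Theory Num.Theory.

Inductive color := Bullet | Circle.

Definition color_eqb (a b : color) : bool :=
  match a, b with Bullet, Bullet | Circle, Circle => true | _, _ => false end.

(* A bi-colored weighted ordered vertex with V identified with {0,...,l-1}
   (i.e. {1,...,l} shifted) via the total order: colors pi, weights v (>= 1). *)

(* vectors in Z_{>=0}^2 as pairs (r, n) of naturals *)
Definition vec := (nat * nat)%type.
Definition vadd (a b : vec) : vec := (a.1 + b.1, a.2 + b.2)%N.
Definition vsum (s : seq vec) : vec := foldr vadd (0, 0)%N s.

(* slope mu(r,n) = n/r in Q ∪ {∞}; None encodes ∞ *)
Definition mu (w : vec) : option rat :=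
  if w.1 == 0%N then None else Some (((w.2)%:R / (w.1)%:R)%R).

Definition mu_lt (a b : option rat) : bool :=
  match a, b with
  | Some x, Some y => (x < y)%R
  | Some _, None => true
  | None, _ => false
  end.
Definition mu_le (a b : option rat) : bool := ~~ mu_lt b a.

(* conditions (a),(b) for index i (0-based: compares w_i and w_{i+1}) *)
Definition cond_a (ws : seq vec) (i : nat) : bool :=
  mu_lt (mu (nth (0,0)%N ws i.+1)) (mu (nth (0,0)%N ws i)) &&
  mu_le (mu (vsum (drop i.+1 ws))) (mu (vsum (take i.+1 ws))).
Definition cond_b (ws : seq vec) (i : nat) : bool :=
  mu_le (mu (nth (0,0)%N ws i)) (mu (nth (0,0)%N ws i.+1)) &&
  mu_lt (mu (vsum (take i.+1 ws))) (mu (vsum (drop i.+1 ws))).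

Definition s_l (ws : seq vec) : int :=
  let idx := iota 0 (size ws).-1 in
  if all (fun i => cond_a ws i || cond_b ws i) idx
  then ((-1) ^+ count (cond_b ws) idx)%R
  else 0%R.

Definition vertex_vec (c : color) (k : nat) : vec :=
  match c with Bullet => (k, 0%N) | Circle => (0%N, k) end.

Definition s_vertex (l : nat) (pi : 'I_l -> color) (v : 'I_l -> nat) : int :=
  s_l [seq vertex_vec (pi i) (v i) | i <- enum 'I_l].

Definition r_vertex (l : nat) (pi : 'I_l -> color) (v : 'I_l -> nat) : nat :=
  (\sum_(i < l | color_eqb (pi i) Bullet) v i)%N.

From mathcomp Require Import all_boot all_order all_algebra.

(* Two leading circle vertices both have slope infinity.  At the first index,
   condition (a) would need the slope of the second vector to be strictly below
   infinity, and condition (b) would need the slope of the rest to be strictly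
   above the slope infinity of the first vector; both fail, so the sign
   vanishes.  Neither the weights nor r(Lambda) = 2 play a role. *)

Lemma mu_vertical (w : vec) : w.1 = 0%N -> mu w = None.
Proof. by rewrite /mu => ->. Qed.

Lemma s_l_vertical_head (x y : vec) (ws : seq vec) :
  x.1 = 0%N -> y.1 = 0%N -> s_l [:: x, y & ws] = 0%R.
Proof.
move=> x_vert y_vert.
have mu_head : mu (vsum (take 1 [:: x, y & ws])) = None.
  by apply: mu_vertical; rewrite /= addn0.
have not_a : cond_a [:: x, y & ws] 0 = false by rewrite /cond_a /= mu_vertical.
have not_b : cond_b [:: x, y & ws] 0 = false by rewrite /cond_b mu_head andbF.
by rewrite /s_l /= not_a not_b.
Qed.

Lemma nth_vertex_seq (l : nat) (pi : 'I_l -> color) (v : 'I_l -> nat) (k : 'I_l) :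
  nth (0, 0)%N [seq vertex_vec (pi i) (v i) | i <- enum 'I_l] k
  = vertex_vec (pi k) (v k).
Proof. by rewrite (nth_map k) ?size_enum_ord // nth_ord_enum. Qed.

Theorem lemma4p8 (l : nat) (pi : 'I_l -> color) (v : 'I_l -> nat)
  (hv : forall i, (0 < v i)%N)
  (hr : r_vertex pi v = 2%N)
  (h12 : forall i : 'I_l, (i < 2)%N -> pi i = Circle)
  (hl : (2 <= l)%N) :
  s_vertex pi v = 0%R.
Proof.
have vertical (k : 'I_l) : (k < 2)%N ->
    (nth (0, 0)%N [seq vertex_vec (pi i) (v i) | i <- enum 'I_l] k).1 = 0%N.
  by move=> k_lt2; rewrite nth_vertex_seq h12.
have := vertical (Ordinal hl) isT; have := vertical (Ordinal (ltnW hl)) isT.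
have : (2 <= size [seq vertex_vec (pi i) (v i) | i <- enum 'I_l])%N.
  by rewrite size_map size_enum_ord.
rewrite /s_vertex; case: [seq _ | i <- _] => [|x [|y ws]] //= _.
exact: s_l_vertical_head.
Qed.
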